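(* Let $\omega\in\mathbb{F}_8$ be a root of $y^3+y+1$, let $m\in\mathbb{N}$, let $L,M,N$ be nonempty subsets of $[m]$, and let $D=\Delta_L+\omega\Delta_M+\omega^2\Delta_N\subseteq\mathbb{F}_8^m$, so that $D^{(2)}=\{(d_1,d_3,d_2): d_1\in\Delta_L,d_2\in\Delta_M,d_3\in\Delta_N\}\subseteq(\mathbb{F}_2^m)^3$. Let $s=|L|+|M|+|N|$. Then the binary code $C^{(2)}_{D^*}=\{c^{(2)}_{D^*}(\alpha,\beta,\gamma):\alpha,\beta,\gamma\in\mathbb{F}_2^m\}$, where $c^{(2)}_{D^*}(\alpha,\beta,\gamma)=((\alpha,\beta,\gamma)\cdot(d_1,d_3,d_2))_{(d_1,d_3,d_2)\in D^{(2)}\setminus\{0\}}$, is a $[2^s-1,\,s,\,2^{s-1}]$ linear $1$-weight code over $\mathbb{F}_2$, with exactly $1$ codeword of weight $0$ and $2^s-1$ codewords of weight $2^{s-1}$. In particular, it is a minimal code. Further, it is a Griesmer code and hence distance optimal. If $Z_i=|\{(\alpha,\beta,\gamma)\in(\mathbb{F}_2^m)^3: wt(c^{(2)}_{D^*}(\alpha,\beta,\gamma))=i\}|$, then $Z_0=2^{3m-s}$ and $Z_{2^{s-1}}=2^{3m-s}(2^s-1)$.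
   Context: $[m]=\{1,\dots,m\}$; $\Delta_L=\{w\in\mathbb{F}_2^m:\{i:w_i\ne0\}\subseteq L\}$; $A+\omega B+\omega^2C=\{a+\omega b+\omega^2c: a\in A,b\in B,c\in C\}$. The dot product on $(\mathbb{F}_2^m)^3=\mathbb{F}_2^{3m}$ is the standard one. (This code is the subfield code, with respect to the basis $\{1,\omega,\omega^2\}$, of the octanary code $C_{D^*}=\{(v\cdot d)_{d\in D\setminus\{0\}}:v\in\mathbb{F}_8^m\}$.) A code is $1$-weight if all nonzero codewords have the same Hamming weight; minimal if for every nonzero codeword $c$, each nonzero codeword $c'$ with $\mathrm{Supp}(c')\subseteq\mathrm{Supp}(c)$ is a scalar multiple of $c$; Griesmer if its parameters $[n,k,d]$ over $\mathbb{F}_q$ satisfy $\sum_{i=0}^{k-1}\lceil d/q^i\rceil=n$; distance optimal if no $[n,k,d+1]$ linear code exists. *)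

From HB Require Import structures.
From mathcomp Require Import all_boot all_order all_algebra all_field.
Set Implicit Arguments. Unset Strict Implicit. Unset Printing Implicit Defensive.
Import GRing.Theory.
Local Open Scope ring_scope.

Section Codes.
Variable F : finFieldType.

Definition supp n (v : 'rV[F]_n) : {set 'I_n} := [set j | v 0 j != 0].
Definition wt n (v : 'rV[F]_n) : nat := #|supp v|.

Definition linear_code n (C : {set 'rV[F]_n}) : Prop :=
  0 \in C /\ forall (a : F) x y, x \in C -> y \in C -> a *: x + y \in C.

Definition min_dist n (C : {set 'rV[F]_n}) (d : nat) : Prop :=
  (exists2 c, c \in C & (c != 0) && (wt c == d)) /\
  (forall c, c \in C -> c != 0 -> (d <= wt c)%N).

Definition nkd_code n (C : {set 'rV[F]_n}) (k d : nat) : Prop :=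
  [/\ linear_code C, #|C| = (#|F| ^ k)%N & min_dist C d].

Definition one_weight n (C : {set 'rV[F]_n}) : Prop :=
  forall c c', c \in C -> c' \in C -> c != 0 -> c' != 0 -> wt c = wt c'.

Definition minimal_code n (C : {set 'rV[F]_n}) : Prop :=
  forall c c', c \in C -> c' \in C -> c != 0 -> c' != 0 ->
    supp c' \subset supp c -> exists a : F, c' = a *: c.

Definition ceil_div (a b : nat) : nat := ((a + b - 1) %/ b)%N.

Definition griesmer_code n (C : {set 'rV[F]_n}) (k d : nat) : Prop :=
  nkd_code C k d /\ (\sum_(i < k) ceil_div d (#|F| ^ i)%N)%N = n.

Definition distance_optimal n (C : {set 'rV[F]_n}) (k d : nat) : Prop :=
  nkd_code C k d /\ ~ exists C' : {set 'rV[F]_n}, nkd_code C' k d.+1.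
End Codes.

Notation F2 := ('F_2).

Definition dotv m (u v : 'rV[F2]_m) : F2 := \sum_(i < m) u 0 i * v 0 i.

Definition Delta m (L : {set 'I_m}) : {set 'rV[F2]_m} :=
  [set w : 'rV[F2]_m | [forall i, (w 0 i != 0) ==> (i \in L)]].

Definition triple m := ('rV[F2]_m * 'rV[F2]_m * 'rV[F2]_m)%type.

Definition dot3 m (x y : triple m) : F2 :=
  dotv x.1.1 y.1.1 + dotv x.1.2 y.1.2 + dotv x.2 y.2.

Definition D2 m (L M N : {set 'I_m}) : {set triple m} :=
  [set d : triple m | [&& d.1.1 \in Delta L, d.1.2 \in Delta N & d.2 \in Delta M]].

Definition D2star m (L M N : {set 'I_m}) : {set triple m} := D2 L M N :\ ((0, 0, 0) : triple m).

Definition clen m (L M N : {set 'I_m}) : nat := #|D2star L M N|.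

(* codeword c(alpha,beta,gamma) = ((alpha,beta,gamma).d)_{d in D^(2)\{0}},
   coordinates ordered by the canonical enumeration of D2star *)
Definition cw m (L M N : {set 'I_m}) (x : triple m) : 'rV[F2]_(clen L M N) :=
  \row_(j < clen L M N) dot3 x (enum_val j).

Definition code m (L M N : {set 'I_m}) : {set 'rV[F2]_(clen L M N)} :=
  [set cw L M N x | x in [set: triple m]].

Definition Z m (L M N : {set 'I_m}) (i : nat) : nat :=
  #|[set x : triple m | wt (cw L M N x) == i]|.

(* The set D^(2) = Delta_L x Delta_N x Delta_M is an F_2-subspace of (F_2^m)^3 of
   dimension s, and the codeword of x lists the values of the linear form
   d |-> x.d on its nonzero points.  A linear form over F_2 that is not
   identically zero on a subspace vanishes on exactly half of it, so every
   nonzero codeword has weight 2^(s-1).  The forms vanishing on D^(2) are the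
   x supported on the complements of L, N, M, a subspace of size 2^(3m-s); this
   is the kernel of x |-> c(x), whence 2^s codewords and the counts Z_i.
   Codewords of equal weight with nested supports coincide, which gives
   minimality, and the Plotkin bound rules out minimum distance 2^(s-1)+1. *)

From HB Require Import structures.
From mathcomp Require Import all_boot all_order all_algebra all_field.
From mathcomp Require Import ring zify.
Set Implicit Arguments. Unset Strict Implicit. Unset Printing Implicit Defensive.
Import GRing.Theory.
Local Open Scope ring_scope.

(* finalg does not declare the finite Z-module structure of a product. *)
HB.instance Definition _ (U V : finZmodType) := Finite.on (U * V)%type.

Lemma F2_neq0 (a : 'F_2) : (a != 0) = (a == 1).
Proof. by case: a => [[|[|]] //]. Qed.

Lemma F2_subr_neq0 (a b : 'F_2) : b != 0 -> (a - b != 0) = (a == 0).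
Proof. by case: a => [[|[|]] //] ?; case: b => [[|[|]] //]. Qed.

Section AdditiveF2.
Variables (V : finZmodType) (D : {set V}) (f : V -> 'F_2).
Hypotheses (fB : {morph f : x y / x - y}) (DB : {in D &, forall x y, x - y \in D}).

Lemma card_nonzero_additive_F2 e : e \in D -> f e != 0 ->
  (#|[set d in D | f d != 0]|).*2 = #|D|.
Proof.
(* Translation by e exchanges the zeros and the nonzeros of f in D. *)
move=> De fe; set A := [set d in D | f d != 0]; set B := [set d in D | f d == 0].
have shift_inj : injective (fun d => d - e) := addIr (- e).
have shiftA d : d \in D -> (d - e \in A) = (d \in B).
  by move=> Dd; rewrite !inE DB // Dd fB F2_subr_neq0.
have shiftB d : d \in D -> (d - e \in B) = (d \in A).
  by move=> Dd; rewrite !inE DB // Dd fB -[_ == 0]negbK F2_subr_neq0.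
have shift_le (X Y : {set V}) : X \subset D -> (forall d, d \in X -> d - e \in Y) ->
    (#|X| <= #|Y|)%N.
  move=> XD XY; rewrite -(card_imset X shift_inj).
  by apply/subset_leq_card/subsetP => _ /imsetP [d Xd ->]; apply: XY.
have AD : A \subset D by apply/subsetP => d; rewrite inE => /andP [].
have BD : B \subset D by apply/subsetP => d; rewrite inE => /andP [].
have AB : #|A| = #|B|.
  apply/eqP; rewrite eqn_leq.
  rewrite (shift_le A B AD) => [|d Ad]; last by rewrite shiftB ?(subsetP AD).
  by rewrite (shift_le B A BD) // => d Bd; rewrite shiftA ?(subsetP BD).
have DnA : D :\: [set d | f d != 0] = B.
  by apply/setP => d; rewrite !inE negbK andbC.
by rewrite -(cardsID [set d | f d != 0] D) -setIdE DnA -/A AB addnn.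
Qed.

Lemma card_nonzero_additive_F2_le : ((#|[set d in D | f d != 0%R]|).*2 <= #|D|)%N.
Proof.
have [->|[e]] := set_0Vmem [set d in D | f d != 0]; first by rewrite cards0.
by rewrite inE => /andP [De fe]; rewrite (card_nonzero_additive_F2 De fe).
Qed.
End AdditiveF2.

Lemma card_imset_mul_kernel (U W : finZmodType) (f : U -> W) :
  {morph f : x y / x - y} -> (#|f @: [set: U]| * #|[set x | f x == 0%R]|)%N = #|U|.
Proof.
(* Every fibre of f is a translate of its kernel. *)
move=> fB; rewrite -cardsT -[RHS]sum1_card (partition_big_imset f) /= -sum_nat_const.
apply: eq_bigr => _ /imsetP [x0 _ ->]; rewrite sum1dep_card.
rewrite -(card_preimset [set x | f x == 0] (addIr (- x0))); apply: eq_card => x.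
by rewrite !inE fB subr_eq0.
Qed.

Lemma card_enum_val_pred (T : finType) (A : {set T}) (P : pred T) :
  #|[set j : 'I_#|A| | P (enum_val j)]| = #|[set d in A | P d]|.
Proof.
rewrite -(card_imset _ (@enum_val_inj _ (mem A))); congr #|pred_of_set _|.
apply/setP => d; apply/imsetP/idP => [[j]|].
  by rewrite !inE => Pj ->; rewrite Pj enum_valP.
rewrite inE => /andP [Ad Pd]; exists (enum_rank_in Ad d); last by rewrite enum_rankK_in.
by rewrite inE enum_rankK_in.
Qed.

Section Weight.
Variable F : finFieldType.

Lemma wt_eq0 n (v : 'rV[F]_n) : (wt v == 0%N) = (v == 0).
Proof.
rewrite /wt cards_eq0; apply/eqP/eqP => [supp0|->]; last first.
  by apply/setP => j; rewrite !inE mxE eqxx.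
apply/rowP => j; move/setP/(_ j): supp0; rewrite !inE mxE.
by move/negbFE/eqP.
Qed.

Lemma wt0 n : wt (0 : 'rV[F]_n) = 0%N.
Proof. by apply/eqP; rewrite wt_eq0. Qed.

Lemma wt_sum n (v : 'rV[F]_n) : wt v = (\sum_j ((v 0%R j != 0%R) : nat))%N.
Proof. by rewrite /wt /supp -sum1dep_card big_mkcond. Qed.

Lemma linear_code_subr n (C : {set 'rV[F]_n}) :
  linear_code C -> {in C &, forall x y, x - y \in C}.
Proof. by move=> [_ linC] x y Cx Cy; rewrite addrC -scaleN1r linC. Qed.

Lemma card_wt0_linear_code n (C : {set 'rV[F]_n}) :
  linear_code C -> #|[set c in C | wt c == 0%N]| = 1%N.
Proof.
move=> [C0 _]; apply/eqP/cards1P; exists 0; apply/setP => c.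
by rewrite inE in_set1 wt_eq0 andbC; case: eqP => // ->.
Qed.
End Weight.

Section BinaryCodes.
Variable n : nat.
Implicit Type C : {set 'rV['F_2]_n}.

Lemma card_nonzero_coord_F2 C j : linear_code C ->
  ((#|[set c in C | c 0%R j != 0%R]|).*2 <= #|C|)%N.
Proof.
move=> linC; apply: card_nonzero_additive_F2_le.
- by move=> x y; rewrite !mxE.
- exact: linear_code_subr.
Qed.

Lemma plotkin_bound_F2 C d : linear_code C ->
  (forall c, c \in C -> c != 0 -> (d <= wt c)%N) ->
  (((#|C| - 1) * d).*2 <= n * #|C|)%N.
Proof.
move=> linC wtC; have [C0 _] := linC.
have sum_wt : ((#|C| - 1) * d <= \sum_(c in C) wt c)%N.
  rewrite (big_setD1 0 C0) /= (cardsD1 0 C) C0 add1n subn1 /= -sum_nat_const.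
  apply: leq_trans (leq_addl _ _); apply: leq_sum => c.
  by rewrite in_setD1 => /andP [nz Cc]; apply: wtC.
have sum_col : (\sum_(c in C) wt c = \sum_j #|[set c in C | c 0%R j != 0%R]|)%N.
  under eq_bigr do rewrite wt_sum.
  rewrite exchange_big; apply: eq_bigr => j _.
  rewrite -sum1dep_card big_mkcondr /=.
  by apply: eq_bigr => c _; case: (c 0%R j != 0%R).
apply: (@leq_trans (\sum_(c in C) wt c).*2); first by rewrite leq_double.
rewrite sum_col -mul2n big_distrr /= -[n in (_ <= n * _)%N]card_ord -sum_nat_const.
by apply: leq_sum => j _; rewrite mul2n card_nonzero_coord_F2.
Qed.

Lemma no_code_beyond_simplex_F2 C s : (0 < s)%N -> n = (2 ^ s - 1)%N ->
  ~ nkd_code C s (2 ^ s.-1).+1.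
Proof.
case: s => // s _ nE [linC cardC [_ wtC]].
have := plotkin_bound_F2 linC wtC; rewrite cardC card_Fp // nE /= expnS -mul2n.
by have := expn_gt0 2 s; nia.
Qed.

Lemma supp_inj_F2 : injective (@supp 'F_2 n).
Proof.
move=> u v /setP uv; apply/rowP => j; move: (uv j); rewrite !inE !F2_neq0.
by case: (u 0 j) (v 0 j) => [[|[|]] //] ? [[|[|]] //] ? //= _; apply: val_inj.
Qed.

Lemma one_weight_minimal_F2 C : one_weight C -> minimal_code C.
Proof.
move=> oneC c c' Cc Cc' nz nz' sub; exists 1; rewrite scale1r.
apply: supp_inj_F2; apply/eqP; rewrite eqEcard sub /=.
by rewrite -/(wt c) -/(wt c') (oneC c' c).
Qed.
End BinaryCodes.

Lemma sum_pow2_rev k : (\sum_(i < k) 2 ^ (k.-1 - i) = 2 ^ k - 1)%N.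
Proof.
elim: k => [|k IHk]; first by rewrite big_ord0.
rewrite big_ord_recl /= subn0.
have shiftE (i : 'I_k) : (k - bump 0 i = k.-1 - i)%N by rewrite /bump; lia.
under eq_bigr do rewrite shiftE.
by rewrite IHk expnS; have := expn_gt0 2 k; lia.
Qed.

Lemma sum_ceil_div_pow2 s :
  (\sum_(i < s) ceil_div (2 ^ s.-1) (2 ^ i) = 2 ^ s - 1)%N.
Proof.
rewrite -sum_pow2_rev; apply: eq_bigr => i _.
have le_i : (i <= s.-1)%N by rewrite -ltnS prednK ?(leq_trans _ (ltn_ord i)).
rewrite /ceil_div -(subnK le_i) expnD addnK -addnBA ?expn_gt0 // divnMDl ?expn_gt0 //.
by rewrite divn_small ?addn0 // ltn_subLR ?expn_gt0 // addnC.
Qed.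

Section DeltaSpaces.
Variable m : nat.
Implicit Types (u v w : 'rV['F_2]_m) (S : {set 'I_m}).

Lemma dotvDZl a u v w : dotv (a *: u + v) w = a * dotv u w + dotv v w.
Proof.
rewrite /dotv big_distrr -big_split; apply: eq_bigr => i _.
by rewrite !mxE mulrDl -mulrA.
Qed.

Lemma dotvBr u v w : dotv u (v - w) = dotv u v - dotv u w.
Proof. by rewrite /dotv -sumrB; apply: eq_bigr => i _; rewrite !mxE mulrBr. Qed.

Lemma dotv0r u : dotv u 0 = 0.
Proof. by rewrite -(subrr 0) dotvBr subrr. Qed.

Lemma dotv_delta u i : dotv u (delta_mx 0 i) = u 0 i.
Proof.
rewrite /dotv (bigD1 i) //= big1 => [|j /negbTE ji]; rewrite mxE ?eqxx ?ji ?mulr0 //.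
by rewrite mulr1 addr0.
Qed.

Lemma Delta_supp S w : (w \in Delta S) = (supp w \subset S).
Proof.
rewrite inE; apply/forallP/subsetP => [Sw i | Sw i].
  by rewrite inE => /(implyP (Sw i)).
by apply/implyP => nz; apply: Sw; rewrite inE.
Qed.

Lemma DeltaP S w : reflect (forall i, i \notin S -> w 0 i = 0) (w \in Delta S).
Proof.
rewrite Delta_supp; apply: (iffP subsetP) => [Sw i iS | w0 i].
  by apply/eqP; apply: contraNT iS => nz; apply: Sw; rewrite inE.
by rewrite inE; apply: contraR => /w0 ->.
Qed.

Lemma Delta0 S : 0 \in Delta S.
Proof. by apply/DeltaP => i _; rewrite mxE. Qed.

Lemma Delta_subr S : {in Delta S &, forall v w, v - w \in Delta S}.
Proof.
move=> v w /DeltaP v0 /DeltaP w0; apply/DeltaP => i iS.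
by rewrite !mxE v0 ?w0 ?subrr.
Qed.

Lemma Delta_orthP S u :
  reflect (forall v, v \in Delta S -> dotv u v = 0) (u \in Delta (~: S)).
Proof.
apply: (iffP idP) => [/DeltaP u0 v /DeltaP v0 | orth].
  rewrite /dotv big1 // => i _; case: (boolP (i \in S)) => iS.
    by rewrite u0 ?mul0r // inE iS.
  by rewrite v0 ?mulr0.
apply/DeltaP => i; rewrite inE negbK => iS; rewrite -dotv_delta orth //.
apply/DeltaP => j jS; rewrite mxE eqxx /=; case: eqP => // ji.
by move: jS; rewrite ji iS.
Qed.

Lemma card_Delta S : #|Delta S| = (2 ^ #|S|)%N.
Proof.
rewrite -card_powerset -(card_in_imset (in2W (@supp_inj_F2 m))).
congr #|pred_of_set _|; apply/setP => T; rewrite powersetE.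
apply/imsetP/idP => [[w Sw ->]|TS].
  by rewrite -Delta_supp.
exists (\row_i (i \in T)%:R); last first.
  by apply/setP => i; rewrite inE mxE; case: (i \in T); rewrite ?oner_eq0 ?eqxx.
rewrite Delta_supp; apply: subset_trans TS; apply/subsetP => i.
by rewrite inE mxE; case: (i \in T); rewrite ?eqxx.
Qed.
End DeltaSpaces.

Section DualPair.
Variable m : nat.
Implicit Types (L M N : {set 'I_m}) (x d e : triple m).

Lemma card_triple : #|{: triple m}| = (2 ^ (3 * m))%N.
Proof. by rewrite !card_prod !card_mx card_Fp // mul1n -!expnD; congr (2 ^ _)%N; lia. Qed.

Lemma dot3DZl a x y d : dot3 (a *: x + y) d = a * dot3 x d + dot3 y d.
Proof. by rewrite /dot3 /= !dotvDZl; ring. Qed.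

Lemma dot3Br x d e : dot3 x (d - e) = dot3 x d - dot3 x e.
Proof. by rewrite /dot3 /= !dotvBr; ring. Qed.

Lemma mem_D2 L M N d :
  (d \in D2 L M N) = [&& d.1.1 \in Delta L, d.1.2 \in Delta N & d.2 \in Delta M].
Proof. by rewrite inE. Qed.

Lemma D2_setX L M N : D2 L M N = setX (setX (Delta L) (Delta N)) (Delta M).
Proof. by apply/setP => [[[a b] c]]; rewrite !inE andbA. Qed.

Lemma card_D2 L M N : #|D2 L M N| = (2 ^ (#|L| + #|M| + #|N|))%N.
Proof. by rewrite D2_setX !cardsX !card_Delta -!expnD addnAC. Qed.

Lemma D2_0 L M N : (0, 0, 0) \in D2 L M N.
Proof. by rewrite mem_D2 !Delta0. Qed.

Lemma D2_subr L M N : {in D2 L M N &, forall d e, d - e \in D2 L M N}.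
Proof.
move=> [[a b] c] [[a' b'] c']; rewrite !mem_D2 /= => /and3P [La Nb Mc] /and3P [La' Nb' Mc'].
by rewrite !Delta_subr.
Qed.

Lemma D2_orthP L M N x :
  reflect (forall d, d \in D2 L M N -> dot3 x d = 0) (x \in D2 (~: L) (~: M) (~: N)).
Proof.
case: x => [[a b] c]; rewrite mem_D2 /=; apply: (iffP and3P).
  move=> [/Delta_orthP a0 /Delta_orthP b0 /Delta_orthP c0] [[d1 d2] d3].
  by rewrite mem_D2 /= => /and3P [Ld1 Nd2 Md3]; rewrite /dot3 /= a0 ?b0 ?c0 ?addr0.
move=> orth; split; apply/Delta_orthP => v Sv.
- by have := orth (v, 0, 0); rewrite /dot3 /= !dotv0r !addr0 mem_D2 Sv !Delta0; apply.
- by have := orth (0, v, 0); rewrite /dot3 /= !dotv0r add0r addr0 mem_D2 Sv !Delta0; apply.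
- by have := orth (0, 0, v); rewrite /dot3 /= !dotv0r !add0r mem_D2 Sv !Delta0; apply.
Qed.
End DualPair.

Section SubfieldCode.
Variables (m : nat) (L M N : {set 'I_m}).
Local Notation s := (#|L| + #|M| + #|N|)%N.
Local Notation cw := (cw L M N).
Local Notation C := (code L M N).
Implicit Types x y : triple m.

Lemma cw_linear a x y : cw (a *: x + y) = a *: cw x + cw y.
Proof. by apply/rowP => j; rewrite !mxE dot3DZl. Qed.

Lemma cwB : {morph cw : x y / x - y}.
Proof. by move=> x y; rewrite -scaleN1r addrC cw_linear scaleN1r addrC. Qed.

Lemma code_linear : linear_code C.
Proof.
split; first by apply/imsetP; exists 0; rewrite // -(subrr (0 : triple m)) cwB subrr.
by move=> a _ _ /imsetP [x _ ->] /imsetP [y _ ->]; rewrite -cw_linear imset_f.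
Qed.

Lemma wt_cw_card x : wt (cw x) = #|[set d in D2 L M N | dot3 x d != 0]|.
Proof.
have -> : [set d in D2 L M N | dot3 x d != 0] = [set d in D2star L M N | dot3 x d != 0].
  apply/setP => d; rewrite /D2star !inE; have [->|] //= := eqVneq d (0, 0, 0).
  by rewrite /dot3 /= !dotv0r !addr0 eqxx andbF.
by rewrite -card_enum_val_pred; apply: eq_card => j; rewrite !inE mxE.
Qed.

Lemma wt_cwE x :
  wt (cw x) = if x \in D2 (~: L) (~: M) (~: N) then 0%N else (2 ^ s.-1)%N.
Proof.
have [noD | [e]] := set_0Vmem [set d in D2 L M N | dot3 x d != 0].
  have /D2_orthP -> : forall d, d \in D2 L M N -> dot3 x d = 0.
    by move=> d Dd; apply/eqP; move/setP/(_ d): noD; rewrite in_set0 in_set Dd => /negbFE.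
  by rewrite wt_cw_card noD cards0.
rewrite inE => /andP [De xe].
have /D2_orthP/negbTE -> : ~ forall d, d \in D2 L M N -> dot3 x d = 0.
  by move=> orth; rewrite orth ?eqxx in xe.
have := card_nonzero_additive_F2 (dot3Br x) (@D2_subr _ L M N) De xe.
rewrite -wt_cw_card card_D2; case: s => [/(congr1 odd)|k]; first by rewrite odd_double.
by rewrite expnS mul2n => /double_inj.
Qed.

Lemma kernel_cw : [set x | cw x == 0] = D2 (~: L) (~: M) (~: N).
Proof.
apply/setP => x; rewrite inE -wt_eq0 wt_cwE.
by case: (x \in _); rewrite ?eqxx // expn_eq0.
Qed.

Lemma card_dual_D2 : #|D2 (~: L) (~: M) (~: N)| = (2 ^ (3 * m - s))%N.
Proof.
rewrite card_D2; congr (2 ^ _)%N.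
by have := cardsC L; have := cardsC M; have := cardsC N; rewrite card_ord; lia.
Qed.

Lemma s_le_3m : (s <= 3 * m)%N.
Proof.
by have := max_card L; have := max_card M; have := max_card N; rewrite card_ord; lia.
Qed.

Lemma card_code : #|C| = (2 ^ s)%N.
Proof.
have := card_imset_mul_kernel cwB; rewrite kernel_cw card_dual_D2 card_triple.
rewrite -(subnKC s_le_3m) expnD addKn => /eqP; rewrite eqn_pmul2r ?expn_gt0 //.
by move/eqP.
Qed.

Lemma clen_D2 : clen L M N = (2 ^ s - 1)%N.
Proof.
by rewrite /clen /D2star -card_D2 (cardsD1 (0, 0, 0) (D2 L M N)) D2_0 add1n subn1.
Qed.

Lemma wt_code c : c \in C -> c != 0 -> wt c = (2 ^ s.-1)%N.
Proof.
move=> /imsetP [x _ ->] nz; rewrite wt_cwE; case: ifP => // Kx.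
by rewrite -kernel_cw inE (negbTE nz) in Kx.
Qed.

Lemma one_weight_code : one_weight C.
Proof. by move=> c c' Cc Cc' nz nz'; rewrite !wt_code. Qed.

Lemma card_code_nz : #|C :\ 0| = (2 ^ s - 1)%N.
Proof. by rewrite -card_code (cardsD1 0 C) (proj1 code_linear) add1n subn1. Qed.

Lemma card_code_wt : #|[set c in C | wt c == (2 ^ s.-1)%N]| = (2 ^ s - 1)%N.
Proof.
rewrite -card_code_nz; apply: eq_card => c; rewrite !inE.
have [->|nz] := eqVneq c 0; first by rewrite wt0 eq_sym expn_eq0 andbF.
by case Cc: (c \in C); rewrite //= wt_code ?eqxx.
Qed.

Lemma code_min_dist : (0 < s)%N -> min_dist C (2 ^ s.-1)%N.
Proof.
move=> s_gt0; split; last by move=> c Cc nz; rewrite wt_code.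
have [noC|[c]] := set_0Vmem (C :\ 0).
  move: card_code_nz; rewrite noC cards0 -(prednK s_gt0) expnS.
  by have := expn_gt0 2 s.-1; lia.
by rewrite in_setD1 => /andP [nz Cc]; exists c; rewrite // nz /= wt_code.
Qed.

Lemma Z_0E : Z L M N 0 = (2 ^ (3 * m - s))%N.
Proof.
by rewrite /Z -card_dual_D2 -kernel_cw; apply: eq_card => x; rewrite !inE wt_eq0.
Qed.

Lemma Z_pow2E : Z L M N (2 ^ s.-1) = (2 ^ (3 * m - s) * (2 ^ s - 1))%N.
Proof.
rewrite /Z; have -> : [set x | wt (cw x) == (2 ^ s.-1)%N] = ~: D2 (~: L) (~: M) (~: N).
  apply/setP => x; rewrite in_setC in_set wt_cwE.
  by case: (x \in _); rewrite ?eqxx // eq_sym expn_eq0.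
apply/eqP; rewrite -(eqn_add2l #|D2 (~: L) (~: M) (~: N)|) cardsC card_dual_D2 card_triple.
rewrite -(subnKC s_le_3m) addKn expnD.
set a := (2 ^ (3 * m - _))%N; set b := (2 ^ s)%N.
by rewrite -{2}[a]muln1 -mulnDr subnKC ?expn_gt0 // mulnC.
Qed.
End SubfieldCode.

Theorem mainTheorem8 (m : nat) (L M N : {set 'I_m})
  (hL : L != set0) (hM : M != set0) (hN : N != set0) :
  let s := (#|L| + #|M| + #|N|)%N in
  let C := code L M N in
  [/\ clen L M N = (2 ^ s - 1)%N,
      nkd_code C s (2 ^ s.-1)%N,
      one_weight C,
      #|[set c in C | wt c == 0%N]| = 1%N &
      #|[set c in C | wt c == (2 ^ s.-1)%N]| = (2 ^ s - 1)%N] /\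
  [/\ minimal_code C,
      griesmer_code C s (2 ^ s.-1)%N,
      distance_optimal C s (2 ^ s.-1)%N,
      Z L M N 0 = (2 ^ (3 * m - s))%N &
      Z L M N (2 ^ s.-1) = (2 ^ (3 * m - s) * (2 ^ s - 1))%N].
Proof.
move=> s C.
have s_gt0 : (0 < s)%N by rewrite !addn_gt0 card_gt0 hL.
have nkdC : nkd_code C s (2 ^ s.-1)%N.
  by split; [exact: code_linear | rewrite card_code card_Fp | exact: code_min_dist].
split; split => //.
- exact: clen_D2.
- exact: one_weight_code.
- exact/card_wt0_linear_code/code_linear.
- exact: card_code_wt.
- exact/one_weight_minimal_F2/one_weight_code.
- by split; rewrite // card_Fp // sum_ceil_div_pow2 clen_D2.
- by split => // -[C' /(no_code_beyond_simplex_F2 s_gt0 (clen_D2 L M N))].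
- exact: Z_0E.
- exact: Z_pow2E.
Qed.
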